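(* Let $n\in\mathbb N$ and $b=n^2+1$. Then for every $m\in\{2,3,\dots,n\}$, the number $(m\cdot n)^2$ is antipalindromic in base $b$.
   Context: For an integer $b\ge 2$, every natural number $x$ has a unique base-$b$ expansion $x=a_\ell b^\ell+\dots+a_1b+a_0$ with $a_0,\dots,a_\ell\in\{0,1,\dots,b-1\}$ and $a_\ell\neq 0$. The number $x$ is antipalindromic in base $b$ if $a_j=b-1-a_{\ell-j}$ for all $j\in\{0,1,\dots,\ell\}$. *)

From mathcomp Require Import all_boot.
Set Implicit Arguments. Unset Strict Implicit. Unset Printing Implicit Defensive.

Definition base_expansion (b x : nat) (a : seq nat) : Prop :=
  [/\ size a > 0,
      all (fun d => d < b) a,
      nth 0 a (size a).-1 != 0 &
      x = \sum_(j < size a) nth 0 a j * b ^ j].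

Definition antipalindromic (b x : nat) : Prop :=
  exists a : seq nat, base_expansion b x a /\
    forall j, j <= (size a).-1 ->
      nth 0 a j = b - 1 - nth 0 a ((size a).-1 - j).

From mathcomp Require Import all_boot.
From mathcomp Require Import zify.

(* With b = n^2 + 1 and d = m^2 - 1 one has (m n)^2 = d b + (b - 1 - d), so
   (m n)^2 has the two base-b digits [b - 1 - d; d], which are complementary. *)

Lemma antipalindromic_two_digits (b d : nat) :
  0 < d < b -> antipalindromic b (d * b + (b - 1 - d)).
Proof.
move=> /andP[d_gt0 d_ltb].
exists [:: b - 1 - d; d]; split.
  split=> //=.
  - by rewrite !andbT; apply/andP; split; lia.
  - by rewrite -lt0n.
  - by rewrite big_ord_recr big_ord_recr big_ord0 /= expn0 expn1 muln1 addnC.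
by case=> [|[|j]] //= _; lia.
Qed.

Lemma sqrMn_digits (m n : nat) : 0 < m <= n ->
  (m * n) ^ 2 = (m ^ 2 - 1) * (n ^ 2 + 1) + (n ^ 2 + 1 - 1 - (m ^ 2 - 1)).
Proof.
move=> /andP[m_gt0 le_mn].
have : 0 < m ^ 2 by rewrite expn_gt0 m_gt0.
have : m ^ 2 <= n ^ 2 by rewrite leq_exp2r.
rewrite expnMn; case: (m ^ 2) => [|M] // le_MN _; nia.
Qed.

Theorem mainTheorem10 (n : nat) :
  forall m : nat, 2 <= m <= n -> antipalindromic (n ^ 2 + 1) ((m * n) ^ 2).
Proof.
move=> m /andP[m_ge2 le_mn].
rewrite sqrMn_digits; last by rewrite le_mn (leq_trans _ m_ge2).
apply: antipalindromic_two_digits.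
have : 2 ^ 2 <= m ^ 2 by rewrite leq_exp2r.
have : m ^ 2 <= n ^ 2 by rewrite leq_exp2r.
lia.
Qed.
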